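(* Let $C\subset\mathbb R^3$ be an embedded curve with nowhere vanishing curvature which lies in a plane $\Pi$, and let $T_0$ be the reflection of $\mathbb R^3$ with respect to $\Pi$. Then $T_0\circ f=\check f$ for every $f\in\mathcal D(C)$.
   Context: $C$ is oriented. A developable strip along $C$ is the germ along $C$ of a $C^\infty$ embedding $f(u,v)=f(u,0)+v\,\xi_f(u)$ with $\mathbf c_f(u)=f(u,0)$ parametrizing $C$, $\xi_f$ unit, and zero Gaussian curvature; with the Frenet frame $(\mathbf e,\mathbf n,\mathbf b)$ of $\mathbf c_f$ write $\xi_f=\cos\beta_f\,\mathbf e+\sin\beta_f(\cos\alpha_f\,\mathbf n+\sin\alpha_f\,\mathbf b)$. $\mathcal D(C)$: strips with $\mathbf c_f$ inducing the orientation of $C$ and $0<|\cos\alpha_f|<1$, normalized by $0<|\alpha_f|<\pi/2$ (first angular function), $0<\beta_f<\pi$; zero Gaussian curvature is equivalent to $\cot\beta_f=(\alpha_f'+|\mathbf c_f'|\tau_f)/(|\mathbf c_f'|\kappa_f\sin\alpha_f)$ ($\kappa_f,\tau_f$ curvature and torsion of $\mathbf c_f$). The dual $\check f$ of $f$ is the (unique germ of) developable strip with $\check f(u,0)=f(u,0)$ and first angular function $-\alpha_f$. *)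

From Stdlib Require Import Reals.
From Coquelicot Require Import Coquelicot.
Open Scope R_scope.

Definition V3 := (R * R * R)%type.
Definition vx (x : V3) : R := fst (fst x).
Definition vy (x : V3) : R := snd (fst x).
Definition vz (x : V3) : R := snd x.
Definition mkV (a b c : R) : V3 := (a, b, c).
Definition vadd (x y : V3) : V3 := mkV (vx x + vx y) (vy x + vy y) (vz x + vz y).
Definition vscal (k : R) (x : V3) : V3 := mkV (k * vx x) (k * vy x) (k * vz x).
Definition vsub (x y : V3) : V3 := vadd x (vscal (-1) y).
Definition dot (x y : V3) : R := vx x * vx y + vy x * vy y + vz x * vz y.
Definition cross (x y : V3) : V3 :=
  mkV (vy x * vz y - vz x * vy y) (vz x * vx y - vx x * vz y) (vx x * vy y - vy x * vx y).
Definition vnorm (x : V3) : R := sqrt (dot x x).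
Definition det3 (x y z : V3) : R := dot x (cross y z).

Definition dcurve (k : nat) (c : R -> V3) (u : R) : V3 :=
  mkV (Derive_n (fun t => vx (c t)) k u)
      (Derive_n (fun t => vy (c t)) k u)
      (Derive_n (fun t => vz (c t)) k u).

Definition smooth_on (a b : R) (g : R -> R) : Prop :=
  forall (k : nat) (x : R), a < x < b -> ex_derive_n g k x.
Definition smooth_curve_on (a b : R) (c : R -> V3) : Prop :=
  smooth_on a b (fun t => vx (c t)) /\ smooth_on a b (fun t => vy (c t)) /\
  smooth_on a b (fun t => vz (c t)).

Definition speed (c : R -> V3) (u : R) : R := vnorm (dcurve 1 c u).
Definition curvature (c : R -> V3) (u : R) : R :=
  vnorm (cross (dcurve 1 c u) (dcurve 2 c u)) / (speed c u ^ 3).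
Definition torsion (c : R -> V3) (u : R) : R :=
  det3 (dcurve 1 c u) (dcurve 2 c u) (dcurve 3 c u)
  / (vnorm (cross (dcurve 1 c u) (dcurve 2 c u)) ^ 2).
Definition frenet_e (c : R -> V3) (u : R) : V3 :=
  vscal (/ speed c u) (dcurve 1 c u).
Definition frenet_b (c : R -> V3) (u : R) : V3 :=
  vscal (/ vnorm (cross (dcurve 1 c u) (dcurve 2 c u)))
        (cross (dcurve 1 c u) (dcurve 2 c u)).
Definition frenet_n (c : R -> V3) (u : R) : V3 :=
  cross (frenet_b c u) (frenet_e c u).

Definition ruling (c : R -> V3) (al be : R -> R) (u : R) : V3 :=
  vadd (vscal (cos (be u)) (frenet_e c u))
       (vscal (sin (be u)) (vadd (vscal (cos (al u)) (frenet_n c u))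
                                 (vscal (sin (al u)) (frenet_b c u)))).

Definition strip (c : R -> V3) (xi : R -> V3) (u v : R) : V3 :=
  vadd (c u) (vscal v (xi u)).

Definition embedded_curve_nonvanishing_curvature (a b : R) (c : R -> V3) : Prop :=
  a < b /\ smooth_curve_on a b c /\
  (forall u1 u2, a < u1 < b -> a < u2 < b -> c u1 = c u2 -> u1 = u2) /\
  (forall u, a < u < b -> dcurve 1 c u <> mkV 0 0 0) /\
  (forall u, a < u < b -> curvature c u <> 0).

(** The germ along C of f is (the germ of) an embedding: f is injective on
    some neighbourhood {(u,v) | a<u<b, |v| < delta u} of C *)
Definition strip_embedding_germ (a b : R) (f : R -> R -> V3) : Prop :=
  exists delta : R -> R,
    (forall u, a < u < b -> 0 < delta u /\ continuous delta u) /\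
    (forall u1 v1 u2 v2, a < u1 < b -> a < u2 < b ->
       Rabs v1 < delta u1 -> Rabs v2 < delta u2 ->
       f u1 v1 = f u2 v2 -> u1 = u2 /\ v1 = v2).

(** f = strip c xi belongs to D(C), with angular functions alpha, beta:
    xi is given by the angular functions, 0 < |alpha| < pi/2, 0 < beta < pi,
    and zero Gaussian curvature, in the form
    cot beta = (alpha' + |c'| tau) / (|c'| kappa sin alpha). *)
Definition in_DC (a b : R) (c : R -> V3) (al be : R -> R) : Prop :=
  smooth_on a b al /\ smooth_on a b be /\
  (forall u, a < u < b ->
     0 < Rabs (al u) < PI / 2 /\ 0 < be u < PI /\
     cos (be u) / sin (be u) =
       (Derive al u + speed c u * torsion c u)
       / (speed c u * curvature c u * sin (al u))) /\
  strip_embedding_germ a b (strip c (ruling c al be)).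

(** Dual strip: same base curve, first angular function -alpha; its second
    angular function is the unique betacheck in (0,pi) with
    cot betacheck = (-alpha' + |c'| tau)/(|c'| kappa sin(-alpha)),
    i.e. betacheck = pi/2 - atan(that quantity). *)
Definition dual_beta (c : R -> V3) (al : R -> R) (u : R) : R :=
  PI / 2 - atan ((Derive (fun t => - al t) u + speed c u * torsion c u)
                 / (speed c u * curvature c u * sin (- al u))).
Definition dual_strip (c : R -> V3) (al : R -> R) : R -> R -> V3 :=
  strip c (ruling c (fun t => - al t) (dual_beta c al)).

Definition reflection (p N : V3) (x : V3) : V3 :=
  vsub x (vscal (2 * dot N (vsub x p)) N).

From Stdlib Require Import Reals Lra Lia.
From Coquelicot Require Import Coquelicot.
Open Scope R_scope.

(* All derivatives of a curve lying in the plane with unit normal N are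
   orthogonal to N; hence the torsion vanishes, e and n are orthogonal to N
   and b is a multiple of N.  With zero torsion the zero-Gaussian-curvature
   relation is invariant under alpha -> -alpha, so the dual strip has the
   same second angular function beta.  The reflection fixes c, e, n and
   reverses b, which is exactly the change alpha -> -alpha. *)

Ltac vec_unfold := unfold dot, cross, vsub, vadd, vscal, reflection, vx, vy, vz, mkV; simpl.

Lemma V3_ext x y : vx x = vx y -> vy x = vy y -> vz x = vz y -> x = y.
Proof.
  destruct x as [[x1 x2] x3], y as [[y1 y2] y3]; unfold vx, vy, vz; simpl.
  intros -> -> ->; reflexivity.
Qed.

Lemma dot_vscal_r x y s : dot x (vscal s y) = s * dot x y.
Proof. vec_unfold; ring. Qed.

Lemma vscal_vscal s t x : vscal s (vscal t x) = vscal (s * t) x.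
Proof. apply V3_ext; vec_unfold; ring. Qed.

Lemma unit_norm_dot_self N : vnorm N = 1 -> dot N N = 1.
Proof.
  unfold vnorm; intros HN.
  assert (0 <= dot N N) by (vec_unfold; nra).
  rewrite <- (sqrt_sqrt (dot N N)), HN by assumption; ring.
Qed.

Lemma cross_orthogonal_parallel N x y :
  dot N N = 1 -> dot N x = 0 -> dot N y = 0 ->
  cross x y = vscal (dot N (cross x y)) N.
Proof.
  intros HN Hx Hy.
  (* N x ((x x y) x N) expanded twice by the BAC-CAB rule *)
  assert (E : vscal (dot N N) (cross x y)
              = vadd (vscal (dot N (cross x y)) N)
                     (vsub (vscal (dot N x) (cross N y)) (vscal (dot N y) (cross N x))))
    by (apply V3_ext; vec_unfold; ring).
  rewrite HN, Hx, Hy in E.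
  apply V3_ext; generalize (f_equal vx E) (f_equal vy E) (f_equal vz E); vec_unfold; lra.
Qed.

Lemma det3_orthogonal N x y z :
  dot N N = 1 -> dot N x = 0 -> dot N y = 0 -> dot N z = 0 -> det3 x y z = 0.
Proof.
  intros HN Hx Hy Hz; unfold det3.
  rewrite (cross_orthogonal_parallel N y z), dot_vscal_r by assumption.
  replace (dot x N) with (dot N x) by (vec_unfold; ring).
  rewrite Hx; ring.
Qed.

Section SmoothOnInterval.

Variables a b : R.

Lemma locally_open_interval x : a < x < b -> locally x (fun y => a < y < b).
Proof.
  apply (open_and (fun y => a < y) (fun y => y < b)); [apply open_gt | apply open_lt].
Qed.

Lemma smooth_on_scal f k : smooth_on a b f -> smooth_on a b (fun y => k * f y).
Proof. intros Hf n x Hx; apply ex_derive_n_scal_l, Hf, Hx. Qed.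

Lemma smooth_on_plus f g :
  smooth_on a b f -> smooth_on a b g -> smooth_on a b (fun y => f y + g y).
Proof.
  intros Hf Hg n x Hx; apply ex_derive_n_plus;
    apply (filter_imp (fun y => a < y < b)); try (intros y Hy k _; auto);
    exact (locally_open_interval x Hx).
Qed.

Lemma Derive_n_plus_on f g n x :
  smooth_on a b f -> smooth_on a b g -> a < x < b ->
  Derive_n (fun y => f y + g y) n x = Derive_n f n x + Derive_n g n x.
Proof.
  intros Hf Hg Hx; apply Derive_n_plus;
    apply (filter_imp (fun y => a < y < b)); try (intros y Hy k _; auto);
    exact (locally_open_interval x Hx).
Qed.

Lemma Derive_n_dot_curve N c k u :
  smooth_curve_on a b c -> a < u < b ->
  Derive_n (fun t => dot N (c t)) k u = dot N (dcurve k c u).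
Proof.
  intros [Hx [Hy Hz]] Hu; unfold dot at 1.
  rewrite (Derive_n_plus_on _ _ _ _ (smooth_on_plus _ _ (smooth_on_scal _ _ Hx) (smooth_on_scal _ _ Hy))
             (smooth_on_scal _ _ Hz) Hu).
  rewrite (Derive_n_plus_on _ _ _ _ (smooth_on_scal _ _ Hx) (smooth_on_scal _ _ Hy) Hu).
  rewrite !Derive_n_scal_l; reflexivity.
Qed.

Lemma planar_dcurve_orthogonal N p c k u :
  smooth_curve_on a b c -> (forall t, a < t < b -> dot N (vsub (c t) p) = 0) ->
  a < u < b -> (0 < k)%nat -> dot N (dcurve k c u) = 0.
Proof.
  intros Hc Hplane Hu Hk.
  rewrite <- (Derive_n_dot_curve N c k u Hc Hu).
  rewrite (Derive_n_ext_loc _ (fun _ => dot N p)).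
  - destruct k as [|k]; [lia | apply Derive_n_const].
  - apply (filter_imp (fun t => a < t < b)); [| exact (locally_open_interval u Hu)].
    intros t Ht; generalize (Hplane t Ht); vec_unfold; lra.
Qed.

End SmoothOnInterval.

Lemma atan_cot x : 0 < x < PI -> atan (cos x / sin x) = PI / 2 - x.
Proof.
  intros Hx.
  replace (cos x / sin x) with (tan (PI / 2 - x))
    by (unfold tan; rewrite sin_shift, cos_shift; reflexivity).
  apply atan_tan; lra.
Qed.

Lemma dual_beta_torsion_free c al be u :
  torsion c u = 0 -> 0 < be u < PI ->
  cos (be u) / sin (be u)
    = (Derive al u + speed c u * torsion c u) / (speed c u * curvature c u * sin (al u)) ->
  dual_beta c al u = be u.
Proof.
  intros Ht Hbe Hcot; unfold dual_beta.
  rewrite Derive_opp, sin_neg, Ht; rewrite Ht in Hcot.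
  replace ((- Derive al u + speed c u * 0) / (speed c u * curvature c u * - sin (al u)))
    with ((Derive al u + speed c u * 0) / (speed c u * curvature c u * sin (al u)))
    by (replace (speed c u * curvature c u * - sin (al u))
          with (- (speed c u * curvature c u * sin (al u))) by ring;
        unfold Rdiv; rewrite Rinv_opp; ring).
  rewrite <- Hcot, atan_cot by assumption; ring.
Qed.

Lemma frenet_b_parallel N c u :
  dot N N = 1 -> dot N (dcurve 1 c u) = 0 -> dot N (dcurve 2 c u) = 0 ->
  exists lam, frenet_b c u = vscal lam N.
Proof.
  intros HN H1 H2; eexists; unfold frenet_b.
  rewrite (cross_orthogonal_parallel N (dcurve 1 c u) (dcurve 2 c u)) at 2 by assumption.
  rewrite vscal_vscal; reflexivity.
Qed.

Lemma reflection_strip_planar p N c al be lam u v :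
  dot N N = 1 -> dot N (vsub (c u) p) = 0 -> dot N (frenet_e c u) = 0 ->
  frenet_b c u = vscal lam N ->
  reflection p N (strip c (ruling c al be) u v)
  = strip c (ruling c (fun t => - al t) be) u v.
Proof.
  intros HN Hc He Hb.
  assert (Hn : dot N (frenet_n c u) = 0) by (unfold frenet_n; rewrite Hb; vec_unfold; ring).
  unfold strip, ruling; rewrite cos_neg, sin_neg, Hb.
  set (e := frenet_e c u) in *; set (n := frenet_n c u) in *.
  set (w := vadd (c u) _).
  assert (Dw : dot N (vsub w p) = v * sin (be u) * sin (al u) * lam).
  { transitivity (dot N (vsub (c u) p) + v * cos (be u) * dot N e
                  + v * sin (be u) * cos (al u) * dot N n
                  + v * sin (be u) * sin (al u) * lam * dot N N).
    - unfold w; vec_unfold; ring.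
    - rewrite HN, Hc, He, Hn; ring. }
  unfold reflection; rewrite Dw; apply V3_ext; unfold w; vec_unfold; ring.
Qed.

Theorem lemma4p1 (a b : R) (c : R -> V3) (p N : V3) :
  embedded_curve_nonvanishing_curvature a b c ->
  vnorm N = 1 ->
  (forall u, a < u < b -> dot N (vsub (c u) p) = 0) ->
  forall al be : R -> R,
    in_DC a b c al be ->
    forall u v, a < u < b ->
      reflection p N (strip c (ruling c al be) u v)
      = dual_strip c al u v.
Proof.
  intros [_ [Hsm _]] HnN Hplane al be [_ [_ [Hang _]]] u v Hu.
  destruct (Hang u Hu) as [_ [Hbe Hcot]].
  pose proof (unit_norm_dot_self N HnN) as HN.
  pose proof (fun k => planar_dcurve_orthogonal a b N p c k u Hsm Hplane Hu) as Hd.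
  assert (Ht : torsion c u = 0).
  { unfold torsion; rewrite (det3_orthogonal N) by auto; apply Rdiv_0_l. }
  assert (He : dot N (frenet_e c u) = 0)
    by (unfold frenet_e; rewrite dot_vscal_r, Hd by auto; ring).
  destruct (frenet_b_parallel N c u HN (Hd 1%nat ltac:(lia)) (Hd 2%nat ltac:(lia))) as [lam Hb].
  rewrite (reflection_strip_planar _ _ _ _ _ _ _ _ HN (Hplane u Hu) He Hb).
  unfold dual_strip, strip, ruling; rewrite (dual_beta_torsion_free c al be u Ht Hbe Hcot).
  reflexivity.
Qed.
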